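(* Let $m \ge 1$ be an integer, let $N \ge 0$ and $s$ be integers with $0 \le s \le N$ and $N + m - 1 > 0$, and let $y \in (0,1)$, all held fixed. For real $n > 0$ let $\beta_n$ denote the Beta-Binomial distribution on $\{0,1,\ldots,m\}$ with probability mass function \[ p(l \mid y, n, m, s, N) = \binom{m}{l}\frac{B(l + ny + s,\; m - l + n(1-y) + N - s)}{B(ny + s,\; n(1-y) + N - s)}, \qquad l = 0,1,\ldots,m, \] where $B(\cdot,\cdot)$ is the Beta function. Let $0 < \underline{n} < \overline{n}$. Then \[ y > \frac{s + m - 1}{N + m - 1} \implies \beta_{\overline{n}} \ge_{\mathrm{st}} \beta_{\underline{n}}, \] and \[ y < \frac{s}{N + m - 1} \implies \beta_{\overline{n}} \le_{\mathrm{st}} \beta_{\underline{n}}. \]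
   Context: For two probability distributions $P, Q$ on $\{0,1,\ldots,m\}$, first-order stochastic dominance $P \ge_{\mathrm{st}} Q$ means $P(\{l' : l' > l\}) \ge Q(\{l' : l' > l\})$ for every $l$ (equivalently, the cumulative distribution function of $P$ is pointwise no larger than that of $Q$); $P \le_{\mathrm{st}} Q$ means $Q \ge_{\mathrm{st}} P$. *)

From HB Require Import structures.
From mathcomp Require Import all_boot all_order all_algebra.
From mathcomp Require Import all_classical all_reals all_analysis.
Set Implicit Arguments. Unset Strict Implicit. Unset Printing Implicit Defensive.
Import Order.TTheory GRing.Theory Num.Theory.
Local Open Scope ring_scope.
Local Open Scope classical_set_scope.

Definition Beta (R : realType) (a b : R) : R :=
  fine (\int[@lebesgue_measure R]_(t in `]0%R, 1%R[)
          ((t `^ (a - 1)) * ((1 - t) `^ (b - 1)))%:E)%E.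

Definition bb_pmf (R : realType) (y n : R) (m s N : nat) (l : nat) : R :=
  if (l <= m)%N then
    'C(m, l)%:R
    * Beta (l%:R + n * y + s%:R) ((m - l)%:R + n * (1 - y) + N%:R - s%:R)
    / Beta (n * y + s%:R) (n * (1 - y) + N%:R - s%:R)
  else 0.

Definition upper_tail (R : realType) (P : nat -> R) (m l : nat) : R :=
  \sum_(l.+1 <= k < m.+1) P k.

Definition st_ge (R : realType) (m : nat) (P Q : nat -> R) : Prop :=
  forall l : nat, upper_tail Q m l <= upper_tail P m l.

(* The Beta-binomial pmf p_n(l) = C(m,l) B(l + a_n, m - l + b_n) / B(a_n, b_n), with
   a_n = n y + s and b_n = n (1 - y) + N - s, satisfies
   p(l+1) / p(l) = C(m,l+1)/C(m,l) * (l + a_n) / (m - l - 1 + b_n),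
   because B(x + 1, y) y = x B(x, y + 1).  Comparing the factors (l + a_n)/(m - l - 1 + b_n)
   for two values of n, the sign of the cross difference is that of
   (n' - n) (y (N + m - 1) - (s + l)), which is constant on 0 <= l < m under either
   hypothesis on y.  So the two pmfs are ordered in the likelihood ratio order, and this order
   implies first-order stochastic dominance.
   The Beta function identities B(x, y) = B(x + 1, y) + B(x, y + 1) and
   y B(x + 1, y) = x B(x, y + 1) (integration by parts) are proved for the integrals over
   [1/(n+3), 1 - 1/(n+3)], where the integrand is continuous, and pass to the limit by monotone
   convergence; the same two identities bound the truncated integrals, hence B(x, y) is finite. *)
From HB Require Import structures.
From mathcomp Require Import all_boot all_order all_algebra.
From mathcomp Require Import all_classical all_reals all_analysis.
From mathcomp Require Import measurable_realfun ring lra.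
Set Implicit Arguments. Unset Strict Implicit. Unset Printing Implicit Defensive.
Import Order.TTheory GRing.Theory Num.Theory.
Import numFieldNormedType.Exports.
Local Open Scope ring_scope.

Section likelihood_ratio_order.
Variable R : numDomainType.
Implicit Types P Q : nat -> R.

Definition lr_ge m P Q := forall j k, (j <= k <= m)%N -> Q k * P j <= P k * Q j.

Lemma lr_ge_adjacent m P Q :
  (forall k, (k <= m)%N -> 0 < P k) -> (forall k, (k <= m)%N -> 0 < Q k) ->
  (forall i, (i < m)%N -> Q i.+1 * P i <= P i.+1 * Q i) ->
  lr_ge m P Q.
Proof.
move=> P_gt0 Q_gt0 adj j; elim=> [|k IH] /andP[jk km].
  by move: jk; rewrite leqn0 => /eqP ->; rewrite mulrC.
move: jk; rewrite leq_eqVlt => /orP[/eqP ->|jk]; first by rewrite mulrC.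
have km' : (k <= m)%N := ltnW km.
have jm : (j <= m)%N := ltnW (leq_trans jk km).
have PQk : 0 < P k * Q k by rewrite mulr_gt0 ?P_gt0 ?Q_gt0.
rewrite -(ler_pM2r PQk).
have -> : Q k.+1 * P j * (P k * Q k) = (Q k.+1 * P k) * (Q k * P j) by ring.
have -> : P k.+1 * Q j * (P k * Q k) = (P k.+1 * Q k) * (P k * Q j) by ring.
apply: ler_pM; [| |exact: adj|by apply: IH; rewrite -ltnS jk km'].
- by rewrite mulr_ge0 // ltW ?P_gt0 ?Q_gt0.
- by rewrite mulr_ge0 // ltW ?P_gt0 ?Q_gt0.
Qed.

End likelihood_ratio_order.

Lemma lr_ge_st_ge (R : realType) m (P Q : nat -> R) :
  \sum_(0 <= k < m.+1) P k = 1 -> \sum_(0 <= k < m.+1) Q k = 1 ->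
  lr_ge m P Q -> st_ge m P Q.
Proof.
move=> sumP sumQ PQ l; rewrite /upper_tail.
have [ml|lm] := leqP m l; first by rewrite !big_geq.
have sum_split (F : nat -> R) : \sum_(0 <= k < m.+1) F k =
    \sum_(0 <= k < l.+1) F k + \sum_(l.+1 <= k < m.+1) F k.
  by rewrite (@big_cat_nat _ _ _ l.+1) // ltnW.
set TP := \sum_(l.+1 <= k < m.+1) P k; set TQ := \sum_(l.+1 <= k < m.+1) Q k.
have lowP : \sum_(0 <= k < l.+1) P k = 1 - TP by rewrite -sumP sum_split addrK.
have lowQ : \sum_(0 <= k < l.+1) Q k = 1 - TQ by rewrite -sumQ sum_split addrK.
have cross : \sum_(l.+1 <= k < m.+1) \sum_(0 <= j < l.+1) (P k * Q j - Q k * P j)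
    = TP - TQ.
  rewrite (eq_bigr (fun k => P k * (1 - TQ) - Q k * (1 - TP))); last first.
    by move=> k _; rewrite sumrB -!mulr_sumr lowP lowQ.
  by rewrite sumrB -!mulr_suml -/TP -/TQ; ring.
rewrite -subr_ge0 -cross big_nat_cond; apply: sumr_ge0 => k /andP[/andP[lk km] _].
rewrite big_nat_cond; apply: sumr_ge0 => j /andP[/andP[_ jl] _].
by rewrite subr_ge0 PQ // (leq_trans (ltnW jl) lk).
Qed.

Section beta_integral.
Local Open Scope classical_set_scope.
Variable R : realType.
Local Notation mu := (@lebesgue_measure R).
Implicit Types (x y t p : R) (n : nat).

Definition beta_integrand x y t : R := t `^ (x - 1) * (1 - t) `^ (y - 1).

Definition cutoff n : R := n.+3%:R^-1.

Definition cutoff_itv n : set R := `[cutoff n, 1 - cutoff n].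

Definition beta_trunc x y n : R := \int[mu]_(t in cutoff_itv n) beta_integrand x y t.

Definition beta_boundary x y n : R :=
  cutoff n `^ x * (1 - cutoff n) `^ y - (1 - cutoff n) `^ x * cutoff n `^ y.

Lemma cutoff_gt0 n : 0 < cutoff n.
Proof. by rewrite invr_gt0 ltr0n. Qed.

Lemma cutoff_le n : cutoff n <= 3^-1.
Proof. by rewrite lef_pV2 ?posrE ?ltr0n // ler_nat. Qed.

Lemma cutoff_lt n : cutoff n < 1 - cutoff n.
Proof. have := cutoff_le n; lra. Qed.

Lemma cutoff_nonincreasing m n : (m <= n)%N -> cutoff n <= cutoff m.
Proof. by move=> mn; rewrite lef_pV2 ?posrE ?ltr0n // ler_nat. Qed.

Lemma cutoff_cvg0 : cutoff n @[n --> \oo] --> (0 : R).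
Proof.
have := @cvg_harmonic R; rewrite -(cvg_shiftn 2).
by apply: cvg_trans; apply: near_eq_cvg; apply: nearW => n; rewrite /cutoff /= addn2.
Qed.

Lemma measurable_cutoff_itv n : measurable (cutoff_itv n).
Proof. exact: measurable_itv. Qed.

Lemma cutoff_itv_measure n : fine (mu (cutoff_itv n)) = 1 - cutoff n - cutoff n.
Proof. by rewrite lebesgue_measure_itv /= lte_fin cutoff_lt. Qed.

Lemma cutoff_itvP n t : cutoff_itv n t -> cutoff n <= t <= 1 - cutoff n.
Proof. by rewrite /cutoff_itv /= in_itv. Qed.

Lemma cutoff_itv_sub n : cutoff_itv n `<=` `]0, 1[.
Proof.
move=> t /cutoff_itvP /andP[t_ge t_le]; have := cutoff_gt0 n.
by rewrite /= in_itv /=; move=> ?; apply/andP; split; lra.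
Qed.

Lemma in_cutoff_itv n t : t \in cutoff_itv n -> 0 < t < 1.
Proof. by rewrite inE => /cutoff_itv_sub; rewrite /= in_itv. Qed.

Lemma cutoff_itv_nondecreasing m n : (m <= n)%N -> cutoff_itv m `<=` cutoff_itv n.
Proof.
move=> mn t /cutoff_itvP /andP[t_ge t_le]; have := cutoff_nonincreasing mn.
by rewrite /cutoff_itv /= in_itv /= => ?; apply/andP; split; lra.
Qed.

Lemma cutoff_itv_near t : 0 < t < 1 -> \forall n \near \oo, cutoff_itv n t.
Proof.
move=> /andP[t0 t1].
have m0 : 0 < Num.min t (1 - t) by rewrite lt_min t0 /=; lra.
near=> n.
have : cutoff n < Num.min t (1 - t) by near: n; exact: (cvgr_lt _ cutoff_cvg0).
rewrite lt_min => /andP[? ?].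
by rewrite /cutoff_itv /= in_itv /=; apply/andP; split; lra.
Unshelve. all: by end_near. Qed.

Lemma powRD1 t p : 0 < t -> t `^ (p + 1) = t `^ p * t.
Proof. by move=> t0; rewrite powRD ?powRr1 ?ltW //; apply/implyP => _; rewrite gt_eqF. Qed.

Lemma powR_le1 t p : 0 < t <= 1 -> 0 <= p -> t `^ p <= 1.
Proof. by move=> t01 p0; rewrite -(powRr0 t) ger_powR. Qed.

Lemma powR_continuous p t : 0 < t -> {for t, continuous (@powR R ^~ p)}.
Proof.
move=> t0; apply: differentiable_continuous; apply/derivable1_diffP.
by apply: derivable_powR; rewrite in_itv /= andbT.
Qed.

Lemma onem_powR_continuous p t : t < 1 -> {for t, continuous (fun t => (1 - t) `^ p)}.
Proof.
move=> t1; have onem_t : {for t, continuous (fun t : R => 1 - t)}.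
  by apply: cvgB; [exact: cvg_cst|exact: cvg_id].
have pow_1t : {for 1 - t, continuous (@powR R ^~ p)} by apply: powR_continuous; lra.
exact: continuous_comp onem_t pow_1t.
Qed.

Lemma is_derive_onem_powR p t : t < 1 ->
  is_derive t 1 (fun t => (1 - t) `^ p) (- (p * (1 - t) `^ (p - 1))).
Proof.
move=> t1.
have d1 : is_derive t (1 : R) (cst (1 : R) - id) (0 - 1) by apply: is_deriveB.
have d2 : is_derive (1 - t) (1 : R) (@powR R ^~ p) (p * (1 - t) `^ (p - 1)).
  by apply: is_derive1_powR; lra.
have := is_derive1_comp (f := @powR R ^~ p) (g := cst 1 - id) (x := t) d2 d1.
by rewrite sub0r mulrN1.
Qed.

Lemma derive1_onem_powR p t : t < 1 ->
  (fun t => (1 - t) `^ p)^`() t = - (p * (1 - t) `^ (p - 1)).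
Proof. by move=> t1; rewrite derive1E; case: (is_derive_onem_powR p t1). Qed.

Lemma derivable_oo_LRcontinuous_powR p a b : 0 < a -> a < b ->
  derivable_oo_LRcontinuous (@powR R ^~ p) a b.
Proof.
move=> a0 ab; split.
- move=> t; rewrite in_itv /= => /andP[a_t _].
  by apply: derivable_powR; rewrite in_itv /= andbT; lra.
- exact/cvg_at_right_filter/powR_continuous.
- by apply/cvg_at_left_filter/powR_continuous; lra.
Qed.

Lemma derivable_oo_LRcontinuous_onem_powR p a b : a < b -> b < 1 ->
  derivable_oo_LRcontinuous (fun t => (1 - t) `^ p) a b.
Proof.
move=> ab b1; split.
- move=> t; rewrite in_itv /= => /andP[_ tb].
  have t1 : t < 1 by lra.
  by case: (is_derive_onem_powR p t1).
- by apply/cvg_at_right_filter/onem_powR_continuous; lra.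
- exact/cvg_at_left_filter/onem_powR_continuous.
Qed.

Lemma beta_integrand_ge0 x y t : 0 <= beta_integrand x y t.
Proof. by rewrite mulr_ge0 ?powR_ge0. Qed.

Lemma measurable_beta_integrand x y : measurable_fun setT (beta_integrand x y).
Proof.
apply: measurable_funM; first exact: measurable_powR.
by apply: (measurableT_comp (measurable_powR _)); exact: measurable_funB.
Qed.

Lemma beta_integrand_continuous x y t : 0 < t < 1 ->
  {for t, continuous (beta_integrand x y)}.
Proof.
move=> /andP[t0 t1].
by apply: cvgM; [exact: powR_continuous|exact: onem_powR_continuous].
Qed.

Lemma beta_integrand_integrable x y n :
  mu.-integrable (cutoff_itv n) (EFin \o beta_integrand x y).
Proof.
apply: continuous_compact_integrable; first exact: segment_compact.
apply: continuous_in_subspaceT => t /in_cutoff_itv.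
exact: beta_integrand_continuous.
Qed.

Lemma beta_integrand_pascal x y t : 0 < t < 1 ->
  beta_integrand x y t = beta_integrand (x + 1) y t + beta_integrand x (y + 1) t.
Proof.
move=> /andP[t0 t1]; rewrite /beta_integrand.
have -> : x + 1 - 1 = x - 1 + 1 by ring.
have -> : y + 1 - 1 = y - 1 + 1 by ring.
by rewrite powRD1 // powRD1; [ring|lra].
Qed.

Lemma beta_trunc_pascal x y n :
  beta_trunc x y n = beta_trunc (x + 1) y n + beta_trunc x (y + 1) n.
Proof.
rewrite /beta_trunc -RintegralD ?beta_integrand_integrable //;
  last exact: measurable_cutoff_itv.
by apply: eq_Rintegral => t /in_cutoff_itv; exact: beta_integrand_pascal.
Qed.

Lemma beta_trunc_parts x y n : 0 < x -> 0 < y ->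
  y * beta_trunc (x + 1) y n - x * beta_trunc x (y + 1) n = beta_boundary x y n.
Proof.
move=> x0 y0; set a := cutoff n.
have a0 : 0 < a := cutoff_gt0 n.
have a1 : 1 - a < 1 by lra.
have in_ab t : t \in `[a, 1 - a]%R -> 0 < t < 1.
  by rewrite in_itv /= => /andP[? ?]; apply/andP; split; lra.
have := @Rintegration_by_parts R (@powR R ^~ x) (fun t => (1 - t) `^ y)
  (fun t => x * t `^ (x - 1)) (fun t => - (y * (1 - t) `^ (y - 1))) a (1 - a) (cutoff_lt n).
have cf : {within `[a, 1 - a], continuous (fun t => x * t `^ (x - 1))}.
  apply: continuous_in_subspaceT => t; rewrite inE /= => /in_ab /andP[t0 _].
  by apply: cvgM; [exact: cvg_cst|exact: powR_continuous].
have Ff : {in `]a, 1 - a[%R, (@powR R ^~ x)^`() =1 (fun t => x * t `^ (x - 1))}.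
  move=> t; rewrite in_itv /= => /andP[? _].
  by rewrite powR_derive1 // in_itv /= andbT; lra.
have cg : {within `[a, 1 - a], continuous (fun t => - (y * (1 - t) `^ (y - 1)))}.
  apply: continuous_in_subspaceT => t; rewrite inE /= => /in_ab /andP[_ t1].
  by apply: cvgN; apply: cvgM; [exact: cvg_cst|exact: onem_powR_continuous].
have Gg : {in `]a, 1 - a[%R, (fun t => (1 - t) `^ y)^`() =1
                           (fun t => - (y * (1 - t) `^ (y - 1)))}.
  by move=> t; rewrite in_itv /= => /andP[_ ?]; rewrite derive1_onem_powR //; lra.
move=> /(_ cf (derivable_oo_LRcontinuous_powR _ a0 (cutoff_lt n)) Ff cg
            (derivable_oo_LRcontinuous_onem_powR _ (cutoff_lt n) a1) Gg).
have E1 : \int[mu]_(t in `[a, 1 - a]) (t `^ x * - (y * (1 - t) `^ (y - 1)))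
    = - y * beta_trunc (x + 1) y n.
  rewrite /beta_trunc -RintegralZl ?beta_integrand_integrable //;
    last exact: measurable_cutoff_itv.
  by apply: eq_Rintegral => t _; rewrite /beta_integrand addrK; ring.
have E2 : \int[mu]_(t in `[a, 1 - a]) (x * t `^ (x - 1) * (1 - t) `^ y)
    = x * beta_trunc x (y + 1) n.
  rewrite /beta_trunc -RintegralZl ?beta_integrand_integrable //;
    last exact: measurable_cutoff_itv.
  by apply: eq_Rintegral => t _; rewrite /beta_integrand addrK; ring.
rewrite E1 E2 (_ : 1 - (1 - a) = a) /beta_boundary -/a; last by ring.
lra.
Qed.

Lemma beta_boundary_le1 x y n : 0 <= x -> 0 <= y -> `|beta_boundary x y n| <= 1.
Proof.
move=> x0 y0; have a0 := cutoff_gt0 n; have a3 := cutoff_le n.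
have a_le1 p : 0 <= p -> cutoff n `^ p <= 1 by apply: powR_le1; apply/andP; split; lra.
have b_le1 p : 0 <= p -> (1 - cutoff n) `^ p <= 1.
  by apply: powR_le1; apply/andP; split; lra.
have := a_le1 _ x0; have := a_le1 _ y0; have := b_le1 _ x0; have := b_le1 _ y0.
have := powR_ge0 (cutoff n) x; have := powR_ge0 (cutoff n) y.
have := powR_ge0 (1 - cutoff n) x; have := powR_ge0 (1 - cutoff n) y.
rewrite /beta_boundary ler_norml => *; apply/andP; split; nra.
Qed.

Lemma beta_boundary_cvg0 x y : 0 < x -> 0 < y -> beta_boundary x y n @[n --> \oo] --> (0 : R).
Proof.
move=> x0 y0.
have a_cvg p : 0 < p -> cutoff n `^ p @[n --> \oo] --> (0 : R).
  move=> p0; have := (cvg_at_rightP (@powR R ^~ p) 0 0).1 (powR_cvg0 p0).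
  by apply; split; [exact: cutoff_gt0|exact: cutoff_cvg0].
have b_cvg p : (1 - cutoff n) `^ p @[n --> \oo] --> (1 : R).
  have onem_cvg : 1 - cutoff n @[n --> \oo] --> (1 : R).
    by rewrite -[X in _ --> X]subr0; apply: cvgB; [exact: cvg_cst|exact: cutoff_cvg0].
  have := cvg_comp _ _ onem_cvg (powR_continuous (p := p) ltr01).
  by rewrite /= powR1.
have := cvgB (cvgM (a_cvg _ x0) (b_cvg y)) (cvgM (b_cvg x) (a_cvg _ y0)).
by rewrite mul0r mulr0 subr0; apply.
Qed.

Lemma beta_trunc_le1 x y n : 1 <= x -> 1 <= y -> beta_trunc x y n <= 1.
Proof.
move=> x1 y1.
have one_integrable : mu.-integrable (cutoff_itv n) (EFin \o cst (1 : R)).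
  apply: continuous_compact_integrable; first exact: segment_compact.
  by apply: continuous_subspaceT => t; exact: cvg_cst.
apply: (@le_trans _ _ (\int[mu]_(t in cutoff_itv n) (1 : R))).
  apply: le_Rintegral; [exact: measurable_cutoff_itv|
                        exact: beta_integrand_integrable|exact: one_integrable|].
  move=> t /cutoff_itv_sub; rewrite /= in_itv /= => /andP[t0 t1].
  apply: mulr_ile1; rewrite ?powR_ge0 //; apply: powR_le1; rewrite ?subr_ge0 //;
    apply/andP; split; lra.
rewrite Rintegral_cst; last exact: measurable_cutoff_itv.
rewrite cutoff_itv_measure mul1r.
by have := cutoff_gt0 n; lra.
Qed.

Lemma beta_trunc_bounded x y : 0 < x -> 0 < y -> exists C, forall n, beta_trunc x y n <= C.
Proof.
move=> x0 y0; set K := (x + 2) / y + 1.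
exists (K + (y * K + 1) / x) => n.
have parts_le a b : 0 < a -> 0 < b ->
    b * beta_trunc (a + 1) b n <= a * beta_trunc a (b + 1) n + 1 /\
    a * beta_trunc a (b + 1) n <= b * beta_trunc (a + 1) b n + 1.
  move=> a0 b0; have := beta_boundary_le1 n (ltW a0) (ltW b0).
  by rewrite -(beta_trunc_parts n a0 b0) ler_norml => /andP[? ?]; split; lra.
have x10 : 0 < x + 1 by lra.
have Jx1 : beta_trunc (x + 1) y n <= K.
  have [shift_le _] := parts_le _ _ x10 y0.
  have le1 : beta_trunc (x + 1) (y + 1) n <= 1 by apply: beta_trunc_le1; lra.
  have Jx2 : beta_trunc (x + 1 + 1) y n <= (x + 2) / y.
    rewrite ler_pdivlMr // mulrC.
    by apply: le_trans shift_le _; have := ler_wpM2l (ltW x10) le1; lra.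
  by rewrite beta_trunc_pascal /K lerD.
have Jy1 : beta_trunc x (y + 1) n <= (y * K + 1) / x.
  have [_ shift_le] := parts_le _ _ x0 y0.
  rewrite ler_pdivlMr // mulrC.
  by apply: le_trans shift_le _; rewrite lerD2r ler_wpM2l // ltW.
by rewrite beta_trunc_pascal lerD.
Qed.

Lemma beta_trunc_EFin x y n :
  (beta_trunc x y n)%:E = (\int[mu]_(t in cutoff_itv n) (beta_integrand x y t)%:E)%E.
Proof.
rewrite /beta_trunc /Rintegral fineK //.
by apply: integrable_fin_num; [exact: measurable_cutoff_itv|exact: beta_integrand_integrable].
Qed.

Lemma beta_trunc_cvg_integral x y : ((beta_trunc x y n)%:E @[n --> \oo] -->
  \int[mu]_(t in `]0%R, 1%R[) (beta_integrand x y t)%:E)%E.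
Proof.
pose g n := (EFin \o beta_integrand x y) \_ (cutoff_itv n).
have mg n : measurable_fun setT (g n).
  apply/(measurable_restrictT _ _).1; first exact: measurable_cutoff_itv.
  apply/measurable_EFinP; exact: measurable_funS (measurable_beta_integrand x y).
have g0 n t : setT t -> (0 <= g n t)%E.
  by move=> _; apply: erestrict_ge0 => u _; rewrite lee_fin beta_integrand_ge0.
have g_nd t : setT t -> {homo g^~ t : m n / (m <= n)%N >-> (m <= n)%E}.
  move=> _ m n mn; rewrite /g /patch.
  case: ifPn => [/set_mem tm|_]; last by case: ifP; rewrite ?lee_fin ?beta_integrand_ge0.
  by rewrite ifT //; apply/mem_set; exact: cutoff_itv_nondecreasing mn _ tm.
have := cvg_monotone_convergence (mu := mu) measurableT mg g0 g_nd.
have -> : (fun n => \int[mu]_(t in setT) g n t)%E = (fun n => (beta_trunc x y n)%:E).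
  by apply: boolp.funext => n; rewrite beta_trunc_EFin [RHS]integral_mkcond.
suff -> : (\int[mu]_(t in setT) limn (g^~ t))%E =
          (\int[mu]_(t in `]0%R, 1%R[) (beta_integrand x y t)%:E)%E by [].
rewrite [RHS]integral_mkcond; apply: eq_integral => t _.
rewrite /patch; case: ifPn => [/set_mem t01|t01]; apply: lim_near_cst => //.
  move: t01; rewrite /= in_itv /= => /cutoff_itv_near; apply: filterS => n tn.
  by rewrite /g /patch ifT //; apply/mem_set.
apply: nearW => n; rewrite /g /patch ifF //; apply/negbTE.
by apply: contra t01 => /set_mem /cutoff_itv_sub tn; exact/mem_set.
Qed.

Lemma beta_integral_fin_num x y : 0 < x -> 0 < y ->
  (\int[mu]_(t in `]0%R, 1%R[) (beta_integrand x y t)%:E)%E \is a fin_num.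
Proof.
move=> x0 y0; have [C JC] := beta_trunc_bounded x0 y0.
have cvgJ := @beta_trunc_cvg_integral x y.
rewrite ge0_fin_numE; last by apply: integral_ge0 => t _; rewrite lee_fin beta_integrand_ge0.
apply: (@le_lt_trans _ _ C%:E); last exact: ltry.
rewrite -(cvg_lim _ cvgJ) //; apply: lime_le; first by apply/cvg_ex; eexists; exact: cvgJ.
by apply: nearW => n; rewrite lee_fin.
Qed.

Lemma beta_trunc_cvg x y : 0 < x -> 0 < y -> beta_trunc x y n @[n --> \oo] --> Beta x y.
Proof.
move=> x0 y0; have := @beta_trunc_cvg_integral x y.
have -> : (\int[mu]_(t in `]0%R, 1%R[) (beta_integrand x y t)%:E)%E = (Beta x y)%:E.
  by rewrite fineK // beta_integral_fin_num.
exact: fine_cvg.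
Qed.

Lemma Beta_pascal x y : 0 < x -> 0 < y -> Beta x y = Beta (x + 1) y + Beta x (y + 1).
Proof.
move=> x0 y0; have x10 : 0 < x + 1 by lra. have y10 : 0 < y + 1 by lra.
have := beta_trunc_cvg x0 y0; rewrite (eq_cvg _ _ (beta_trunc_pascal x y)).
move/cvg_unique; apply; first exact: Rhausdorff.
exact: cvgD (beta_trunc_cvg x10 y0) (beta_trunc_cvg x0 y10).
Qed.

Lemma Beta_shift x y : 0 < x -> 0 < y -> y * Beta (x + 1) y = x * Beta x (y + 1).
Proof.
move=> x0 y0; have x10 : 0 < x + 1 by lra. have y10 : 0 < y + 1 by lra.
have := beta_boundary_cvg0 x0 y0.
rewrite -(eq_cvg _ _ (fun n => beta_trunc_parts n x0 y0)).
move/cvg_unique => /(_ (@Rhausdorff R) (y * Beta (x + 1) y - x * Beta x (y + 1))) eq0.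
apply/eqP; rewrite -subr_eq0 -eq0 //.
exact: cvgB (cvgMl_tmp (beta_trunc_cvg x10 y0)) (cvgMl_tmp (beta_trunc_cvg x0 y10)).
Qed.

Lemma beta_trunc_le_Beta x y n : 0 < x -> 0 < y -> beta_trunc x y n <= Beta x y.
Proof.
move=> x0 y0; rewrite -lee_fin beta_trunc_EFin fineK ?beta_integral_fin_num //.
apply: ge0_subset_integral; [exact: measurable_cutoff_itv|exact: measurable_itv| | |].
- by apply/measurable_EFinP; exact: measurable_funS (measurable_beta_integrand x y).
- by move=> t _; rewrite lee_fin beta_integrand_ge0.
- exact: cutoff_itv_sub.
Qed.

Lemma beta_trunc_gt0 x y n : 0 < x -> 0 < y -> 0 < beta_trunc x y n.
Proof.
move=> x0 y0; set a := cutoff n; have a0 : 0 < a := cutoff_gt0 n.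
have a3 : a <= 3^-1 := cutoff_le n.
set c := a `^ x * a `^ y.
have c_integrable : mu.-integrable (cutoff_itv n) (EFin \o cst c).
  apply: continuous_compact_integrable; first exact: segment_compact.
  by apply: continuous_subspaceT => t; exact: cvg_cst.
apply: (@lt_le_trans _ _ (\int[mu]_(t in cutoff_itv n) c)).
  rewrite Rintegral_cst ?cutoff_itv_measure; last exact: measurable_cutoff_itv.
  by rewrite mulr_gt0 ?mulr_gt0 ?powR_gt0 // -/a; lra.
rewrite /beta_trunc; apply: le_Rintegral; [exact: measurable_cutoff_itv|exact: c_integrable|
                      exact: beta_integrand_integrable|].
move=> t /cutoff_itvP; rewrite -/a => /andP[a_t t_a].
have pow_le (b z p : R) : 0 < p -> 0 < b -> b <= z -> z <= 1 -> b `^ p <= z `^ (p - 1).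
  move=> p0 b0 bz z1; apply: (@le_trans _ _ (z `^ p)).
    by apply: ge0_ler_powR; rewrite ?nnegrE; lra.
  rewrite -{1}(subrK 1 p) powRD1; last lra.
  by rewrite ler_piMr ?powR_ge0.
by apply: ler_pM; rewrite ?powR_ge0 //; apply: pow_le => //; lra.
Qed.

Lemma Beta_gt0 x y : 0 < x -> 0 < y -> 0 < Beta x y.
Proof.
move=> x0 y0.
exact: lt_le_trans (beta_trunc_gt0 0 x0 y0) (beta_trunc_le_Beta 0 x0 y0).
Qed.

End beta_integral.

Section beta_binomial.
Variable R : realType.
Implicit Types (a b x y : R) (m l : nat).

Definition beta_binomial a b m l : R :=
  if (l <= m)%N then 'C(m, l)%:R * Beta (l%:R + a) ((m - l)%:R + b) / Beta a b else 0.

Lemma sum_binomial_Beta m x y : 0 < x -> 0 < y ->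
  \sum_(0 <= l < m.+1) 'C(m, l)%:R * Beta (l%:R + x) ((m - l)%:R + y) = Beta x y.
Proof.
elim: m x y => [|m IH] x y x0 y0; first by rewrite big_nat1 bin0 subnn !add0r mul1r.
have x10 : 0 < x + 1 by lra. have y10 : 0 < y + 1 by lra.
rewrite (big_nat_recl _ _ _ (leq0n _)) (Beta_pascal x0 y0).
under eq_big_nat => l _ do rewrite binS natrD mulrDl.
rewrite big_split /= addrA addrC; congr (_ + _).
  rewrite -(IH _ _ x10 y0); apply: eq_big_nat => l _.
  by rewrite -natr1 addrAC addrA.
rewrite -(IH _ _ x0 y10) (big_nat_recr _ _ _ (leq0n _)) /= (bin_small (ltnSn m)) mul0r addr0.
rewrite [RHS](big_nat_recl _ _ _ (leq0n _)).
apply: f_equal2.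
  by rewrite !bin0 !subn0 !mul1r -natr1 -addrA [1 + y]addrC.
apply: eq_big_nat => l /andP[_ lm].
have -> : (m - l)%:R = (m - l.+1)%:R + 1 :> R by rewrite natr1 subnSK.
by rewrite -addrA [1 + y]addrC.
Qed.

Lemma beta_binomial_sum a b m : 0 < a -> 0 < b ->
  \sum_(0 <= l < m.+1) beta_binomial a b m l = 1.
Proof.
move=> a0 b0; rewrite -(divff (lt0r_neq0 (Beta_gt0 a0 b0))) -{1}(sum_binomial_Beta m a0 b0).
rewrite mulr_suml; apply: eq_big_nat => l /andP[_ lm].
by rewrite /beta_binomial -ltnS lm.
Qed.

Lemma beta_binomial_gt0 a b m l : 0 < a -> 0 < b -> (l <= m)%N ->
  0 < beta_binomial a b m l.
Proof.
move=> a0 b0 lm; rewrite /beta_binomial lm divr_gt0 ?Beta_gt0 // mulr_gt0 ?ltr0n ?bin_gt0 //.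
by rewrite Beta_gt0 // ltr_wpDl.
Qed.

Lemma beta_binomialS a b m i : 0 < a -> 0 < b -> (i < m)%N ->
  beta_binomial a b m i.+1 = beta_binomial a b m i *
    ('C(m, i.+1)%:R / 'C(m, i)%:R) * ((i%:R + a) / ((m - i.+1)%:R + b)).
Proof.
move=> a0 b0 im; rewrite /beta_binomial im ltnW //.
have x0 : 0 < i%:R + a by rewrite ltr_wpDl.
have y0 : 0 < (m - i.+1)%:R + b by rewrite ltr_wpDl.
have -> : i.+1%:R + a = i%:R + a + 1 by rewrite -natr1 addrAC.
have -> : (m - i)%:R + b = (m - i.+1)%:R + b + 1 by rewrite -(subnSK im) -natr1 addrAC.
rewrite -[Beta (_ + 1) _](mulKf (lt0r_neq0 y0)) Beta_shift //.
have C0_gt0 : 0 < 'C(m, i)%:R :> R by rewrite ltr0n bin_gt0 ltnW.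
by field; rewrite !lt0r_neq0 ?Beta_gt0.
Qed.

Lemma beta_binomial_lr_ge a1 b1 a2 b2 m :
  0 < a1 -> 0 < b1 -> 0 < a2 -> 0 < b2 ->
  (forall i, (i < m)%N ->
     (i%:R + a1) * ((m - i.+1)%:R + b2) <= (i%:R + a2) * ((m - i.+1)%:R + b1)) ->
  lr_ge m (beta_binomial a2 b2 m) (beta_binomial a1 b1 m).
Proof.
move=> a10 b10 a20 b20 cross.
set P := beta_binomial a2 b2 m; set Q := beta_binomial a1 b1 m.
apply: lr_ge_adjacent => [k km|k km|i im]; rewrite ?beta_binomial_gt0 //.
rewrite /P /Q !beta_binomialS // -/P -/Q; set c := 'C(m, i.+1)%:R / 'C(m, i)%:R.
have PQc_ge0 : 0 <= P i * Q i * c.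
  by rewrite !mulr_ge0 ?divr_ge0 ?ler0n // ltW ?beta_binomial_gt0 // ltnW.
have -> : Q i * c * ((i%:R + a1) / ((m - i.+1)%:R + b1)) * P i =
          P i * Q i * c * ((i%:R + a1) / ((m - i.+1)%:R + b1)) by ring.
have -> : P i * c * ((i%:R + a2) / ((m - i.+1)%:R + b2)) * Q i =
          P i * Q i * c * ((i%:R + a2) / ((m - i.+1)%:R + b2)) by ring.
rewrite ler_wpM2l // ler_pdivrMr ?ltr_wpDl // mulrAC ler_pdivlMr ?ltr_wpDl //.
exact: cross.
Qed.

End beta_binomial.

Lemma bb_pmfE (R : realType) (y n : R) (m s N : nat) :
  bb_pmf y n m s N = beta_binomial (n * y + s%:R) (n * (1 - y) + N%:R - s%:R) m.
Proof. by apply/boolp.funext => l; rewrite /bb_pmf /beta_binomial !addrA. Qed.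

Lemma bb_pmf_st_ge (R : realType) (y n1 n2 : R) (m s N : nat) :
  0 < y -> y < 1 -> (s <= N)%N -> 0 < n1 -> 0 < n2 ->
  (forall i, (i < m)%N -> 0 <= (n2 - n1) * (y * (N%:R + m%:R - 1) - (s%:R + i%:R))) ->
  st_ge m (bb_pmf y n2 m s N) (bb_pmf y n1 m s N).
Proof.
move=> y0 y1 sN n1_gt0 n2_gt0 sign.
have sNr : s%:R <= N%:R :> R by rewrite ler_nat.
have a_gt0 n : 0 < n -> 0 < n * y + s%:R.
  by move=> n0; have := mulr_gt0 n0 y0; have := ler0n R s; lra.
have b_gt0 n : 0 < n -> 0 < n * (1 - y) + N%:R - s%:R.
  by move=> n0; have := @mulr_gt0 _ n (1 - y) n0; lra.
rewrite !bb_pmfE; apply: lr_ge_st_ge; rewrite ?beta_binomial_sum ?a_gt0 ?b_gt0 //.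
apply: beta_binomial_lr_ge; rewrite ?a_gt0 ?b_gt0 // => i im.
rewrite -subr_ge0 (_ : _ - _ = (n2 - n1) * (y * (N%:R + m%:R - 1) - (s%:R + i%:R))) ?sign //.
by rewrite natrB // -natr1; ring.
Qed.

Theorem theorem2 (R : realType) (m N s : nat) (y nlo nhi : R) :
  (1 <= m)%N -> (s <= N)%N -> (0 < N + m - 1)%N ->
  0 < y -> y < 1 ->
  0 < nlo -> nlo < nhi ->
  (y > (s + m - 1)%:R / (N + m - 1)%:R ->
     st_ge m (bb_pmf y nhi m s N) (bb_pmf y nlo m s N)) /\
  (y < s%:R / (N + m - 1)%:R ->
     st_ge m (bb_pmf y nlo m s N) (bb_pmf y nhi m s N)).
Proof.
move=> m1 sN NM y0 y1 nlo_gt0 lohi; have nhi_gt0 : 0 < nhi by lra.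
have NM_gt0 : 0 < (N + m - 1)%:R :> R by rewrite ltr0n.
have sub1E k : (k + m - 1)%:R = k%:R + m%:R - 1 :> R.
  by rewrite natrB ?natrD // addn_gt0 m1 orbT.
split=> hy.
- apply: bb_pmf_st_ge => // i im; apply: mulr_ge0; first lra.
  move: hy; rewrite ltr_pdivrMr // !sub1E.
  have : i.+1%:R <= m%:R :> R by rewrite ler_nat.
  by rewrite -natr1; lra.
- apply: bb_pmf_st_ge => // i im; apply: mulr_le0; first lra.
  by move: hy; rewrite ltr_pdivlMr // sub1E; have := ler0n R i; lra.
Qed.
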